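(* The sequence of jumping polynomials $\{T_i\}_{i\ge0}$ in $S$ is well defined: at every step $i\ge1$ the required nonnegative integers $n_{i,j}$ exist (and are unique), the residue $\lambda_i\in k$ is defined, and $T_{i+1}$, $p_{i+1}$, $q_{i+1}$ can be chosen as prescribed.
   Context: Setting: $k$ (the field) is algebraically closed of characteristic $0$; $\nu^*$ is a $k$-valuation of a function field $K^*$ of transcendence degree $2$ with valuation ring $V^*$, value group a subgroup of $\mathbb{Q}$, and residue field $V^*/m_{V^*}=k$; $S$ is an algebraic two-dimensional regular local ring with quotient field $K^*$ dominated by $V^*$, with regular parameters $(x,y)$, and $\nu^*$ is normalized so that $\nu^*(x)=1$. The prescribed construction of jumping polynomials: $T_0=x$, $T_1=y$, $q_0=\infty$, $p_1,q_1$ coprime positive integers with $\nu^*(y)=p_1/q_1$; for $i\ge1$, choose nonnegative integers $n_{i,j}$ ($0\le j<i$) with $n_{i,j}<q_j$ and $q_i\nu^*(T_i)=\sum_{j<i}n_{i,j}\nu^*(T_j)$, let $\lambda_i\in k$ be the residue of $T_i^{q_i}/\prod_{j<i}T_j^{n_{i,j}}$, set $T_{i+1}=T_i^{q_i}-\lambda_i\prod_{j<i}T_j^{n_{i,j}}$, and choose coprime positive integers $p_{i+1},q_{i+1}$ with $\nu^*(T_{i+1})=q_i\nu^*(T_i)+\frac{1}{q_1\cdots q_i}\frac{p_{i+1}}{q_{i+1}}$. *)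

From HB Require Import structures.
From mathcomp Require Import all_boot all_order all_algebra.
From mathcomp Require Import mpoly.
Set Implicit Arguments. Unset Strict Implicit. Unset Printing Implicit Defensive.
Import Order.TTheory GRing.Theory Num.Theory.
Local Open Scope ring_scope.

(* The field k is embedded in K* via the injective ring morphism iota;
   subsets of K* (subrings, ideals) are Prop-valued predicates. *)

Section Defs.
Variables (k K : fieldType) (iota : {rmorphism k -> K}).

Definition meval_k (n : nat) (g : 'I_n -> K) (p : {mpoly k[n]}) : K :=
  (map_mpoly iota p).@[g].

Definition alg_indep (s : seq K) : Prop :=
  forall p : {mpoly k[size s]}, meval_k (fun i => s`_i) p = 0 -> p = 0.

Definition fin_gen_field : Prop :=
  exists n (g : 'I_n -> K), forall z, exists p q : {mpoly k[n]},
    meval_k g q != 0 /\ z = meval_k g p / meval_k g q.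

Definition trdeg2 : Prop :=
  exists a b : K, alg_indep [:: a; b] /\ forall z, ~ alg_indep [:: a; b; z].

Definition function_field_trdeg2 : Prop := fin_gen_field /\ trdeg2.

(* k-valuations of K with values in Q (nu is only meaningful on nonzero elements) *)
Definition is_k_valuation (nu : K -> rat) : Prop :=
  [/\ forall a b, a != 0 -> b != 0 -> nu (a * b) = nu a + nu b,
      forall a b, a != 0 -> b != 0 -> a + b != 0 ->
        Num.min (nu a) (nu b) <= nu (a + b)
    & forall c, c != 0 -> nu (iota c) = 0].

Definition valring (nu : K -> rat) (a : K) : Prop := a = 0 \/ 0 <= nu a.
Definition valmax (nu : K -> rat) (a : K) : Prop := a = 0 \/ 0 < nu a.

(* residue field V/m_V = k, i.e. k -> V/m_V is onto *)
Definition residue_field_is_k (nu : K -> rat) : Prop :=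
  forall a, valring nu a -> exists c : k, valmax nu (a - iota c).

Definition is_ideal (R I : K -> Prop) : Prop :=
  [/\ forall a, I a -> R a, I 0,
      forall a b, I a -> I b -> I (a + b)
    & forall r a, R r -> I a -> I (r * a)].

Definition is_prime_ideal (R I : K -> Prop) : Prop :=
  [/\ is_ideal R I, ~ I 1 &
      forall a b, R a -> R b -> I (a * b) -> I a \/ I b].

Definition fin_gen_ideal (R I : K -> Prop) : Prop :=
  exists s : seq K, forall a, I a <->
    exists c : 'I_(size s) -> K, (forall j, R (c j)) /\
      a = \sum_(j < size s) c j * s`_j.

Definition noetherian (R : K -> Prop) : Prop :=
  forall I, is_ideal R I -> fin_gen_ideal R I.

Definition strict_incl (P Q : K -> Prop) : Prop :=
  (forall a, P a -> Q a) /\ exists a, Q a /\ ~ P a.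

Definition krull_dim2 (R : K -> Prop) : Prop :=
  (exists P0 P1 P2, [/\ is_prime_ideal R P0, is_prime_ideal R P1,
       is_prime_ideal R P2, strict_incl P0 P1 & strict_incl P1 P2]) /\
  ~ (exists P0 P1 P2 P3, [/\ is_prime_ideal R P0, is_prime_ideal R P1,
       is_prime_ideal R P2, is_prime_ideal R P3 &
       [/\ strict_incl P0 P1, strict_incl P1 P2 & strict_incl P2 P3]]).

Definition unitS (R : K -> Prop) (a : K) : Prop := R a /\ a != 0 /\ R a^-1.

(* S is a two-dimensional regular local ring with regular parameters (x, y):
   Noetherian, local with maximal ideal (the non-units) equal to (x, y),
   of Krull dimension 2. *)
Definition regular_local_2 (S : K -> Prop) (x y : K) : Prop :=
  [/\ noetherian S, S x, S y, krull_dim2 S &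
      forall a, S a -> (~ unitS S a <->
        exists s t, [/\ S s, S t & a = x * s + y * t])].

(* S is algebraic: a localization of a finitely generated k-algebra at a prime *)
Definition algebraic_local_ring (S : K -> Prop) : Prop :=
  exists n (g : 'I_n -> K) (P : K -> Prop),
    let A := fun a => exists p : {mpoly k[n]}, a = meval_k g p in
    is_prime_ideal A P /\
    forall z, S z <-> exists a b, [/\ A a, A b, ~ P b & z = a / b].

Definition quotient_field (S : K -> Prop) : Prop :=
  forall z, exists a b, [/\ S a, S b, b != 0 & z = a / b].

Definition dominates (nu : K -> rat) (S : K -> Prop) : Prop :=
  (forall a, S a -> valring nu a) /\
  (forall a, S a -> ~ unitS S a -> valmax nu a).

Definition mprod (T : nat -> K) (i : nat) (nn : nat -> nat) : K :=
  \prod_(j < i) T j ^+ nn j.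

(* the condition on (n_{i,j})_{j<i}: n_{i,j} < q_j for 1 <= j < i (q_0 = oo) and
   q_i nu(T_i) = sum_{j<i} n_{i,j} nu(T_j) *)
Definition ncond (nu : K -> rat) (T : nat -> K) (q : nat -> nat) (i : nat)
    (nn : nat -> nat) : Prop :=
  (forall j, (0 < j < i)%N -> (nn j < q j)%N) /\
  (q i)%:R * nu (T i) = \sum_(j < i) (nn j)%:R * nu (T j).

Definition qprod (q : nat -> nat) (l : nat) : nat := (\prod_(1 <= j < l.+1) q j)%N.

Definition jump_ratio (T : nat -> K) (q : nat -> nat) (i : nat) (nn : nat -> nat) : K :=
  T i ^+ q i / mprod T i nn.

Definition is_residue (nu : K -> rat) (a : K) (lam : k) : Prop :=
  valmax nu (a - iota lam).

Definition history (nu : K -> rat) (x y : K) (T : nat -> K) (p q : nat -> nat)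
    (n : nat -> nat -> nat) (lam : nat -> k) (i : nat) : Prop :=
  [/\ T 0%N = x /\ T 1%N = y,
      forall l, (l <= i)%N -> T l != 0,
      forall l, (0 < l <= i)%N -> [/\ (0 < p l)%N, (0 < q l)%N & coprime (p l) (q l)],
      nu (T 1%N) = (p 1%N)%:R / (q 1%N)%:R &
      forall l, (0 < l < i)%N ->
        [/\ ncond nu T q l (n l),
            is_residue nu (jump_ratio T q l (n l)) (lam l),
            T l.+1 = T l ^+ q l - iota (lam l) * mprod T l (n l) &
            nu (T l.+1) = (q l)%:R * nu (T l) +
              ((qprod q l)%:R)^-1 * ((p l.+1)%:R / (q l.+1)%:R)]].

End Defs.

From HB Require Import structures.
From mathcomp Require Import all_boot all_order all_algebra.
From mathcomp Require Import mpoly.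
From mathcomp Require Import ring lra zify.
From Stdlib Require Import ClassicalEpsilon Classical.
Set Implicit Arguments. Unset Strict Implicit. Unset Printing Implicit Defensive.
Import Order.TTheory GRing.Theory Num.Theory.
Local Open Scope ring_scope.

(* Everything but the nonvanishing of T_(i+1) is arithmetic of values. By
   induction nu(T_l) = A / (q_1 ... q_(l-1)) + p_l / (q_1 ... q_l) with p_l, q_l
   coprime, so the nu(T_j), j < i, expand every element of (1/(q_1 ... q_(i-1)))Z
   uniquely as sum n_j nu(T_j) with 0 <= n_j < q_j for j > 0; this yields the
   n_(i,j), and n_(i,0) > 0 because nu(T_l) exceeds sum_(0<j<l) (q_j - 1) nu(T_j).
   The ratio T_i^(q_i) / prod_j T_j^(n_(i,j)) then has value 0, hence a residue
   lambda_i in k, and T_(i+1) = prod_j T_j^(n_(i,j)) * (ratio - lambda_i) has value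
   q_i nu(T_i) plus a positive rational.
   As n_(l,0) > 0, T_(l+1) = T_l^(q_l) modulo x, so T_(i+1) = y^e modulo x, and
   T_(i+1) = 0 would put a power of y in xS. Then S cannot have dimension 2: in a
   chain of primes P0 < P1 < P2, x is not in P1, the saturations (P1^n : x^oo)
   stabilise modulo x, hence stabilise by Nakayama's lemma, hence vanish by
   Krull's intersection argument, although P1 <> 0. *)

Section Subring.
Variables (k K : fieldType) (iota : {rmorphism k -> K}).

Record k_subring (S : K -> Prop) : Prop := KSubring {
  subringD : forall a b, S a -> S b -> S (a + b);
  subringN : forall a, S a -> S (- a);
  subringM : forall a b, S a -> S b -> S (a * b);
  subring_iota : forall c, S (iota c) }.

Lemma algebraic_local_ring_subring S : algebraic_local_ring iota S -> k_subring S.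
Proof.
case=> n [g [P [[[_ P0 _ _] nP1 Pprime] HS]]].
pose A a := exists p : {mpoly k[n]}, a = meval_k iota g p.
have AD a b : A a -> A b -> A (a + b).
  by case=> p -> [q ->]; exists (p + q); rewrite /meval_k rmorphD mevalD.
have AM a b : A a -> A b -> A (a * b).
  by case=> p -> [q ->]; exists (p * q); rewrite /meval_k rmorphM mevalM.
have AN a : A a -> A (- a).
  by case=> p ->; exists (- p); rewrite /meval_k rmorphN mevalN.
have AC c : A (iota c) by exists c%:MP; rewrite /meval_k map_mpolyC mevalC.
have denM b1 b2 : A b1 -> A b2 -> ~ P b1 -> ~ P b2 -> ~ P (b1 * b2).
  by move=> Ab1 Ab2 nb1 nb2 /(Pprime _ _ Ab1 Ab2) [].
have den_neq0 b : ~ P b -> b != 0 by move=> nPb; apply/eqP=> b0; rewrite b0 in nPb.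
have frac a b : A a -> A b -> ~ P b -> S (a / b) by move=> *; apply/HS; exists a, b.
split.
- move=> _ _ /HS [a1 [b1 [Aa1 Ab1 nb1 ->]]] /HS [a2 [b2 [Aa2 Ab2 nb2 ->]]].
  rewrite (_ : _ + _ = (a1 * b2 + a2 * b1) / (b1 * b2)); last by field; rewrite ?den_neq0.
  by apply: frac; auto.
- by move=> _ /HS [a [b [Aa Ab nb ->]]]; rewrite -mulNr; apply: frac; auto.
- move=> _ _ /HS [a1 [b1 [Aa1 Ab1 nb1 ->]]] /HS [a2 [b2 [Aa2 Ab2 nb2 ->]]].
  rewrite (_ : _ * _ = (a1 * a2) / (b1 * b2)); last by field; rewrite ?den_neq0.
  by apply: frac; auto.
- move=> c; rewrite -(divr1 (iota c)); apply: frac => //.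
  by rewrite -(rmorph1 iota).
Qed.

End Subring.

Section Ideals.
Variable K : fieldType.
Implicit Types (S I J Q : K -> Prop) (u v a b : K).

Definition ideal_mul I J a := exists l : seq (K * K),
  (forall pr, pr \in l -> I pr.1 /\ J pr.2) /\ a = \sum_(pr <- l) pr.1 * pr.2.

Fixpoint ideal_pow S Q n : K -> Prop :=
  if n is n'.+1 then ideal_mul Q (ideal_pow S Q n') else S.

Definition saturation S Q u n a := S a /\ exists j, ideal_pow S Q n (u ^+ j * a).

Definition add_principal S I u a := exists b s, [/\ I b, S s & a = b + u * s].

Definition ideal2 S u v a := exists s t, [/\ S s, S t & a = u * s + v * t].

Definition dvd_in S u a := exists2 c, S c & a = u * c.

End Ideals.

Section SubringTheory.
Variables (k K : fieldType) (iota : {rmorphism k -> K}) (S : K -> Prop).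
Hypothesis HS : k_subring iota S.

Lemma subring0 : S 0.
Proof. by have := subring_iota HS 0; rewrite rmorph0. Qed.

Lemma subring1 : S 1.
Proof. by have := subring_iota HS 1; rewrite rmorph1. Qed.

Lemma subringB a b : S a -> S b -> S (a - b).
Proof. by move=> Sa Sb; apply: (subringD HS) => //; apply: (subringN HS). Qed.

Lemma subringX a n : S a -> S (a ^+ n).
Proof.
move=> Sa; elim: n => [|n IH]; first by rewrite expr0; exact: subring1.
by rewrite exprS; apply: (subringM HS).
Qed.

Lemma subring_prod (I : Type) (r : seq I) (P : pred I) (F : I -> K) :
  (forall i, P i -> S (F i)) -> S (\prod_(i <- r | P i) F i).
Proof. by move=> SF; apply: big_ind => //; [exact: subring1 | exact: (subringM HS)]. Qed.

Lemma unitS1 : unitS S 1.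
Proof. by have S1 := subring1; rewrite /unitS invr1 oner_neq0. Qed.

Lemma unitS_iota c : c != 0 -> unitS S (iota c).
Proof.
move=> c0; split; first exact: (subring_iota HS c).
by rewrite fmorph_eq0 -fmorphV; split=> //; exact: (subring_iota HS c^-1).
Qed.

Lemma unitSM a b : unitS S a -> unitS S b -> unitS S (a * b).
Proof.
move=> [Sa [a0 Sa']] [Sb [b0 Sb']]; split; first exact: (subringM HS).
by rewrite invfM mulf_neq0 //; split=> //; apply: (subringM HS).
Qed.

Lemma idealS : is_ideal S S.
Proof. by split=> //; [exact: subring0 | exact: (subringD HS) | exact: (subringM HS)]. Qed.

Section Ideal.
Variable I : K -> Prop.
Hypothesis HI : is_ideal S I.

Lemma ideal_sub a : I a -> S a.
Proof. by case: HI => + _ _ _; apply. Qed.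

Lemma ideal0 : I 0.
Proof. by case: HI. Qed.

Lemma idealD a b : I a -> I b -> I (a + b).
Proof. by case: HI => _ _ + _; apply. Qed.

Lemma idealZ r a : S r -> I a -> I (r * a).
Proof. by case: HI => _ _ _; apply. Qed.

Lemma idealZr a r : I a -> S r -> I (a * r).
Proof. by move=> Ia Sr; rewrite mulrC; apply: idealZ. Qed.

Lemma idealB a b : I a -> I b -> I (a - b).
Proof.
move=> Ia Ib; apply: idealD => //; rewrite -mulN1r; apply: idealZ => //.
by apply: (subringN HS); exact: subring1.
Qed.

Lemma ideal_sum (T : Type) (r : seq T) (P : pred T) (F : T -> K) :
  (forall i, P i -> I (F i)) -> I (\sum_(i <- r | P i) F i).
Proof. by move=> IF; apply: big_ind => //; [exact: ideal0 | exact: idealD]. Qed.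

Lemma ideal1_unit a : I a -> unitS S a -> I 1.
Proof. by move=> Ia [_ [a0 Sa']]; rewrite -(mulVf a0); apply: idealZ. Qed.

End Ideal.

Lemma prime_ideal_pow P a d : is_prime_ideal S P -> S a -> P (a ^+ d) -> P a.
Proof.
move=> [_ nP1 Pprime] Sa; elim: d => [|d IH]; first by rewrite expr0.
by rewrite exprS => /(Pprime _ _ Sa (subringX _ Sa)) [].
Qed.

Lemma ideal2_ideal u v : S u -> S v -> is_ideal S (ideal2 S u v).
Proof.
move=> Su Sv; split.
- by move=> _ [s [t [Ss St ->]]]; apply: (subringD HS); apply: (subringM HS).
- by exists 0, 0; rewrite !mulr0 addr0; split=> //; exact: subring0.
- move=> _ _ [s [t [Ss St ->]]] [s' [t' [Ss' St' ->]]].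
  by exists (s + s'), (t + t'); split; [exact: (subringD HS)..|ring].
- move=> r _ Sr [s [t [Ss St ->]]].
  by exists (r * s), (r * t); split; [exact: (subringM HS)..|ring].
Qed.

Lemma ideal2C u v a : ideal2 S u v a <-> ideal2 S v u a.
Proof. by split=> -[s [t [Ss St ->]]]; exists t, s; rewrite addrC. Qed.

Section IdealPowers.
Variable Q : K -> Prop.
Hypothesis HQ : is_ideal S Q.

Lemma ideal_mul_ideal I : is_ideal S I -> is_ideal S (ideal_mul Q I).
Proof.
move=> HI; split.
- move=> _ [l [Hl ->]]; rewrite big_seq; apply: (ideal_sum idealS) => pr /Hl [Qpr Ipr].
  by apply: (subringM HS); [exact: (ideal_sub HQ) | exact: (ideal_sub HI)].
- by exists [::]; rewrite big_nil.
- move=> _ _ [l1 [H1 ->]] [l2 [H2 ->]]; exists (l1 ++ l2); rewrite big_cat.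
  by split=> // pr; rewrite mem_cat => /orP [/H1|/H2].
- move=> r _ Sr [l [Hl ->]]; exists [seq (r * pr.1, pr.2) | pr <- l]; split.
    by move=> _ /mapP [pr /Hl [Qpr Ipr] ->]; split=> //; exact: (idealZ HQ).
  by rewrite big_map big_distrr; apply: eq_bigr => pr _; rewrite /= mulrA.
Qed.

Lemma ideal_mul_subr I a : is_ideal S I -> ideal_mul Q I a -> I a.
Proof.
move=> HI [l [Hl ->]]; rewrite big_seq; apply: (ideal_sum HI) => pr /Hl [Qpr Ipr].
by apply: (idealZ HI) => //; exact: (ideal_sub HQ).
Qed.

Lemma ideal_mul_span I r (s : nat -> K) :
  (forall a, I a -> exists2 c : nat -> K, (forall j, S (c j)) & a = \sum_(j < r) c j * s j) ->
  forall a, ideal_mul Q I a ->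
  exists2 c : nat -> K, (forall j, Q (c j)) & a = \sum_(j < r) c j * s j.
Proof.
move=> span _ [l [Hl ->]]; elim: l Hl => [|pr l IH] Hl.
  exists (fun=> 0) => [j|]; first exact: (ideal0 HQ).
  by rewrite big_nil big1 // => j _; rewrite mul0r.
have [Qpr1 /span [d Sd pr2E]] := Hl pr (mem_head pr l).
rewrite big_cons; have [c Qc ->] := IH (fun pr' l_pr' => Hl pr' (@mem_behead _ (pr :: l) _ l_pr')).
exists (fun j => pr.1 * d j + c j) => [j|].
  by apply: (idealD HQ); [exact: (idealZr HQ Qpr1 (Sd j)) | exact: Qc].
by rewrite pr2E mulr_sumr -big_split /=; apply: eq_bigr => j _; rewrite mulrA mulrDl.
Qed.

Lemma ideal_pow_ideal n : is_ideal S (ideal_pow S Q n).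
Proof. by elim: n => [|n IH] /=; [exact: idealS | exact: ideal_mul_ideal]. Qed.

Lemma ideal_pow_succ n a : ideal_pow S Q n.+1 a -> ideal_pow S Q n a.
Proof. exact: (ideal_mul_subr (ideal_pow_ideal n)). Qed.

Lemma ideal_pow_exp n a : Q a -> ideal_pow S Q n (a ^+ n).
Proof.
move=> Qa; elim: n => [|n IH] /=; first by rewrite expr0; exact: subring1.
by exists [:: (a, a ^+ n)]; rewrite big_seq1 exprS; split=> // pr; rewrite inE => /eqP ->.
Qed.

Variable u : K.
Hypothesis Su : S u.

Lemma saturation_ideal n : is_ideal S (saturation S Q u n).
Proof.
have HP := ideal_pow_ideal n; split.
- by move=> a [].
- by split; [exact: subring0 | exists 0%N; rewrite mulr0; exact: ideal0 HP].
- move=> a b [Sa [j1 Pa]] [Sb [j2 Pb]]; split; first exact: (subringD HS).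
  exists (j1 + j2)%N.
  have -> : u ^+ (j1 + j2) * (a + b) = u ^+ j2 * (u ^+ j1 * a) + u ^+ j1 * (u ^+ j2 * b).
    by rewrite exprD; ring.
  by apply: (idealD HP); apply: (idealZ HP) => //; exact: subringX.
- move=> r a Sr [Sa [j Pa]]; split; first exact: (subringM HS).
  by exists j; rewrite mulrCA; exact: (idealZ HP).
Qed.

Lemma saturation_succ n a : saturation S Q u n.+1 a -> saturation S Q u n a.
Proof. by move=> [Sa [j Pa]]; split=> //; exists j; exact: ideal_pow_succ. Qed.

Lemma saturation_cancel n c : S c -> saturation S Q u n (u * c) -> saturation S Q u n c.
Proof. by move=> Sc [_ [j Pa]]; split=> //; exists j.+1; rewrite exprSr -mulrA. Qed.

Lemma ideal_pow_saturation n a : ideal_pow S Q n a -> saturation S Q u n a.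
Proof.
move=> Pa; split; first exact: (ideal_sub (ideal_pow_ideal n)).
by exists 0%N; rewrite expr0 mul1r.
Qed.

End IdealPowers.

Section AddPrincipal.
Variables (I : K -> Prop) (u : K).
Hypotheses (HI : is_ideal S I) (Su : S u).

Lemma add_principal_ideal : is_ideal S (add_principal S I u).
Proof.
split.
- move=> _ [b [s [Ib Ss ->]]]; apply: (subringD HS); first exact: (ideal_sub HI).
  exact: (subringM HS).
- by exists 0, 0; rewrite mulr0 addr0; split=> //; [exact: ideal0 HI | exact: subring0].
- move=> _ _ [b1 [s1 [Ib1 Ss1 ->]]] [b2 [s2 [Ib2 Ss2 ->]]].
  exists (b1 + b2), (s1 + s2); rewrite mulrDr addrACA.
  by split=> //; [exact: (idealD HI) | exact: (subringD HS)].
- move=> r _ Sr [b [s [Ib Ss ->]]]; exists (r * b), (r * s); rewrite mulrDr mulrCA.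
  by split=> //; [exact: (idealZ HI) | exact: (subringM HS)].
Qed.

Lemma add_principal_l a : I a -> add_principal S I u a.
Proof. by move=> Ia; exists a, 0; rewrite mulr0 addr0; split=> //; exact: subring0. Qed.

Lemma add_principal_r s : S s -> add_principal S I u (u * s).
Proof. by move=> Ss; exists 0, s; rewrite add0r; split=> //; exact: ideal0 HI. Qed.

End AddPrincipal.

Lemma fin_gen_idealP I : fin_gen_ideal S I ->
  exists r (s : nat -> K), (forall i, (i < r)%N -> I (s i)) /\
    forall a, I a -> exists2 c : nat -> K, (forall j, S (c j)) & a = \sum_(j < r) c j * s j.
Proof.
case=> s0 gen; exists (size s0), (nth 0 s0); split=> [i ilt|a /gen [c [Sc ->]]].
  apply/gen; exists (fun j => (j == i :> nat)%:R); split=> [j|].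
    by case: (_ == _); [exact: subring1 | exact: subring0].
  rewrite (bigD1 (Ordinal ilt)) //= eqxx mul1r big1 ?addr0 // => j.
  by rewrite -val_eqE /= => /negbTE ->; rewrite mul0r.
exists (fun j => if insub j is Some o then c o else 0) => [j|].
  by case: insub => [o|]; [exact: Sc | exact: subring0].
by apply: eq_bigr => j _; rewrite valK.
Qed.

End SubringTheory.

Section DeterminantTrick.
Variables (K : fieldType) (S G B J : K -> Prop).
Hypotheses (BS : forall a, B a -> S a) (GS : forall g, G g -> S g).
Hypotheses (GB : forall g c, G g -> B c -> G (g - c)).
Hypotheses (GM : forall g h, G g -> G h -> G (g * h)).
Hypotheses (BM : forall a b, B a -> S b -> B (b * a)).
Hypotheses (BD : forall a b, B a -> B b -> B (a + b)).
Hypotheses (JM : forall a b, J a -> S b -> J (b * a)).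
Hypotheses (JD : forall a b, J a -> J b -> J (a + b)) (J0 : J 0).

(* Multiplying by w - c_(r-1,r-1), which stays in G, eliminates s_(r-1) and
   leaves a system of the same shape in s_0, ..., s_(r-2). *)
Lemma determinant_trick r (w : K) (s b : nat -> K) (c : nat -> nat -> K) :
  G w -> (forall i l, (i < r)%N -> (l < r)%N -> B (c i l)) ->
  (forall i, (i < r)%N -> J (b i)) ->
  (forall i, (i < r)%N -> w * s i = b i + \sum_(l < r) c i l * s l) ->
  exists2 g, G g & forall i, (i < r)%N -> J (g * s i).
Proof.
elim: r w b c => [|r IH] w b c Gw Bc Jb sys; first by exists w.
pose u := w - c r r.
have Gu : G u by apply: GB; last exact: Bc.
have Su : S u by apply: GS.
have sys_r : u * s r = b r + \sum_(l < r) c r l * s l.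
  by rewrite /u mulrBl sys // big_ord_recr /=; ring.
have sys' i : (i < r)%N -> u * w * s i =
    (u * b i + c i r * b r) + \sum_(l < r) (u * c i l + c i r * c r l) * s l.
  move=> ir; rewrite (eq_bigr (fun l : 'I_r => u * (c i l * s l) + c i r * (c r l * s l)));
    last by move=> l _; ring.
  rewrite big_split /= -!big_distrr /= -mulrA sys ?(ltn_trans ir) // big_ord_recr /=.
  have -> : \sum_(l < r) c r l * s l = u * s r - b r by rewrite sys_r; ring.
  by ring.
have Bc' i l : (i < r)%N -> (l < r)%N -> B (u * c i l + c i r * c r l).
  move=> ir lr; have ir' := ltn_trans ir (ltnSn r); have lr' := ltn_trans lr (ltnSn r).
  exact: (BD (BM (Bc i l ir' lr') Su) (BM (Bc r l (ltnSn r) lr') (BS (Bc i r ir' (ltnSn r))))).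
have Jb' i : (i < r)%N -> J (u * b i + c i r * b r).
  move=> ir; have ir' := ltn_trans ir (ltnSn r).
  exact: (JD (JM (Jb i ir') Su) (JM (Jb r (ltnSn r)) (BS (Bc i r ir' (ltnSn r))))).
have [g Gg Jg] := IH (u * w) _ _ (GM Gu Gw) Bc' Jb' sys'.
exists (g * u); first exact: GM.
move=> i; rewrite ltnS leq_eqVlt => /orP [/eqP ->|ir]; last first.
  by rewrite -mulrA mulrCA; exact: (JM (Jg i ir) Su).
rewrite -mulrA sys_r mulrDr big_distrr /=; apply: JD; first exact: (JM (Jb r (ltnSn r)) (GS Gg)).
apply: big_ind => // l _; rewrite mulrCA.
exact: (JM (Jg l (ltn_ord l)) (BS (Bc r l (ltnSn r) (ltn_trans (ltn_ord l) (ltnSn r))))).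
Qed.

End DeterminantTrick.

Lemma bounded_choice (T : Type) (x0 : T) r (P : nat -> T -> Prop) :
  (forall i, (i < r)%N -> exists x, P i x) ->
  exists f : nat -> T, forall i, (i < r)%N -> P i (f i).
Proof.
move=> exP; apply: (choice (fun i x => (i < r)%N -> P i x)) => i.
case: (ltnP i r) => [/exP [x Px]|_]; first by exists x.
by exists x0.
Qed.

Section RegularLocalRing.
Variables (k K : fieldType) (iota : {rmorphism k -> K}) (S : K -> Prop) (u v : K).
Hypotheses (HS : k_subring iota S) (Su : S u) (Sv : S v).
Hypothesis nonunitP : forall a, S a -> (~ unitS S a <-> ideal2 S u v a).
Hypothesis S_noetherian : noetherian S.
Hypothesis residueP : forall a, S a -> exists c, ideal2 S u v (a - iota c).

Local Notation m := (ideal2 S u v).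
Let Hm : is_ideal S m := ideal2_ideal HS Su Sv.

Lemma unitS_notin_max a : unitS S a -> ~ m a.
Proof. by move=> Ua /(nonunitP (proj1 Ua)).2; apply. Qed.

Lemma notin_max_unitS a : S a -> ~ m a -> unitS S a.
Proof. by move=> Sa nma; apply: NNPP => /(nonunitP Sa).1. Qed.

Lemma unitSB a c : unitS S a -> m c -> unitS S (a - c).
Proof.
move=> Ua mc; apply: notin_max_unitS; first exact: (subringB HS (proj1 Ua) (ideal_sub Hm mc)).
by move=> mac; apply: (unitS_notin_max Ua); rewrite -(subrK c a); exact: (idealD Hm mac mc).
Qed.

(* As S/m = k, the coefficient t of v^e is a constant modulo m; a nonzero
   constant would make v^e a unit multiple of an element of J. *)
Lemma ideal_sub_pow_add (J : K -> Prop) : is_ideal S J -> (forall s, S s -> J (u * s)) ->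
  forall e, (forall j, (j < e)%N -> ~ J (v ^+ j)) ->
  forall a, J a -> exists t s, [/\ S t, S s & a = v ^+ e * t + u * s].
Proof.
move=> HJ uJ; elim=> [|e IH] notJ a Ja.
  exists a, 0; rewrite expr0 mul1r mulr0 addr0.
  by split=> //; [exact: (ideal_sub HJ Ja) | exact: (subring0 HS)].
have [t [s [St Ss aE]]] := IH (fun j je => notJ j (ltn_trans je (ltnSn e))) a Ja.
rewrite {a}aE in Ja *.
have [c [s' [t' [Ss' St' tE]]]] := residueP St.
have Sves' : S (v ^+ e * s') by apply: (subringM HS (subringX HS _ Sv) Ss').
have [c0|c0] := eqVneq c 0.
  move: tE; rewrite c0 rmorph0 subr0 => ->.
  exists t', (s + v ^+ e * s'); rewrite exprSr.
  by split=> //; [exact: (subringD HS Ss Sves') | ring].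
exfalso; apply: (notJ e (ltnSn e)).
pose w := iota c + v * t'.
have [Sw [w0 Sw']] : unitS S w.
  rewrite /w -[v * t']opprK; apply: unitSB; first exact: (unitS_iota HS c0).
  by exists 0, (- t'); split; [exact: (subring0 HS) | exact: (subringN HS St') | ring].
have -> : v ^+ e = w^-1 * (v ^+ e * t + u * s - u * (s + v ^+ e * s')).
  apply: (mulfI w0); rewrite mulrA mulfV // mul1r.
  have -> : t = w + u * s' by rewrite /w -[t](subrK (iota c)) tE; ring.
  by ring.
apply: (idealZ HJ Sw'); apply: (idealB HS HJ Ja).
by apply: uJ; exact: (subringD HS Ss Sves').
Qed.

Section Saturation.
Variable Q : K -> Prop.
Hypothesis HQ : is_ideal S Q.
Local Notation sat := (saturation S Q u).
Let Hsat n : is_ideal S (sat n) := saturation_ideal HS HQ Su n.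

(* If sat n + uS never stabilised, induction on n with ideal_sub_pow_add would
   show that v^e avoids sat n + uS for all e < n, which is absurd as v^d is in uS. *)
Lemma saturation_stable_mod d c : S c -> v ^+ d = u * c ->
  exists n, forall a, sat n a -> add_principal S (sat n.+1) u a.
Proof.
move=> Sc vd; apply: NNPP => unstable.
have jump n : exists2 a, sat n a & ~ add_principal S (sat n.+1) u a.
  apply: NNPP => njump; apply: unstable; exists n => a san.
  by apply: NNPP => nadd; apply: njump; exists a.
have HJ n := add_principal_ideal HS (Hsat n) Su.
have avoid n e : (e < n)%N -> ~ add_principal S (sat n) u (v ^+ e).
  elim: n e => [|n IH] e //; rewrite ltnS leq_eqVlt => /orP [/eqP ->|en] Jv; last first.
    apply: (IH e en); case: Jv => b [s [sb Ss ->]].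
    by exists b, s; split=> //; exact: (saturation_succ HS HQ sb).
  have [a sa nadd] := jump n.
  have [t [s [St Ss aE]]] := ideal_sub_pow_add (HJ n)
    (fun s => @add_principal_r _ _ _ u (Hsat n) s) IH (add_principal_l HS u sa).
  apply: nadd; rewrite aE; apply: (idealD (HJ n.+1)); first exact: (idealZr (HJ n.+1) Jv St).
  exact: (add_principal_r u (Hsat n.+1) Ss).
apply: (avoid d.+1 d (ltnSn d)); rewrite vd; exact: (add_principal_r u (Hsat d.+1) Sc).
Qed.

(* Nakayama's lemma: writing each generator s_i of sat n as b_i + u c_i with
   b_i in sat (n+1) forces c_i in sat n, so u enters the coefficient matrix. *)
Lemma saturation_nakayama n : (forall a, sat n a -> add_principal S (sat n.+1) u a) ->
  forall a, sat n a -> sat n.+1 a.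
Proof.
move=> stable.
have [r [s [gen_s span_s]]] := fin_gen_idealP HS (S_noetherian (Hsat n)).
have /(bounded_choice (0, fun=> 0)) [f sys] : forall i, (i < r)%N ->
    exists bd : K * (nat -> K), [/\ sat n.+1 bd.1, forall j, S (bd.2 j) &
      s i = bd.1 + \sum_(j < r) u * bd.2 j * s j].
  move=> i ir.
  have [b [c [sb Sc si]]] := stable _ (gen_s i ir).
  have /span_s [d Sd cE] : sat n c.
    apply: (saturation_cancel Sc); have -> : u * c = s i - b by rewrite si addrC addKr.
    exact: (idealB HS (Hsat n) (gen_s i ir) (saturation_succ HS HQ sb)).
  exists (b, d); split=> //=; rewrite si cE mulr_sumr; congr (_ + _).
  by apply: eq_bigr => j _; rewrite mulrA.
have m_coef i l : (i < r)%N -> (l < r)%N -> m (u * (f i).2 l).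
  move=> ir _; have [_ Sf _] := sys i ir.
  by exists ((f i).2 l), 0; rewrite mulr0 addr0; split=> //; exact: (subring0 HS).
have sat_b i : (i < r)%N -> sat n.+1 (f i).1 by move=> ir; have [] := sys i ir.
have gen_sys i : (i < r)%N -> 1 * s i = (f i).1 + \sum_(l < r) u * (f i).2 l * s l.
  by move=> ir; have [_ _ <-] := sys i ir; rewrite mul1r.
have [g [_ [g0 Sg']] sat_gs] := determinant_trick (ideal_sub Hm) (fun a Ua => proj1 Ua)
  unitSB (unitSM HS) (fun a b ma Sb => idealZ Hm Sb ma) (idealD Hm)
  (fun a b Ja Sb => idealZ (Hsat n.+1) Sb Ja) (idealD (Hsat n.+1)) (ideal0 (Hsat n.+1))
  (c := fun i l => u * (f i).2 l) (unitS1 HS) m_coef sat_b gen_sys.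
move=> a /span_s [c Sc ->]; apply: (ideal_sum (Hsat n.+1)) => j _.
rewrite -(mulKf g0 (s j)) mulrA; apply: (idealZ (Hsat n.+1) _ (sat_gs j (ltn_ord j))).
exact: (subringM HS (Sc j) Sg').
Qed.

(* Krull's intersection argument: if sat n = sat (n+1), a power u^N maps every
   generator of sat n into Q * sat n, and the determinant trick over S \ Q
   yields some g not in Q killing all the generators. *)
Lemma saturation_eq0 n : is_prime_ideal S Q -> ~ Q u ->
  (forall a, sat n a -> sat n.+1 a) -> forall a, sat n a -> a = 0.
Proof.
move=> Qprime uQ stable; have [_ _ Qmul] := Qprime.
have [r [s [gen_s span_s]]] := fin_gen_idealP HS (S_noetherian (Hsat n)).
have span_Q := ideal_mul_span HQ (fun a Pa => span_s a (ideal_pow_saturation HS HQ u Pa)).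
have /(bounded_choice (0%N, fun=> 0)) [f sys] : forall i, (i < r)%N ->
    exists jC : nat * (nat -> K), (forall l, Q (jC.2 l)) /\
      u ^+ jC.1 * s i = \sum_(l < r) jC.2 l * s l.
  move=> i ir; have [_ [j /span_Q [C QC sE]]] := stable _ (gen_s i ir).
  by exists (j, C).
pose N := \max_(i < r) (f i).1.
have fN i : (i < r)%N -> ((f i).1 <= N)%N by move=> ir; exact: (leq_bigmax (Ordinal ir)).
have uNQ : ~ Q (u ^+ N) by move/(prime_ideal_pow HS Qprime Su).
pose G g := S g /\ ~ Q g.
have GB g c : G g -> Q c -> G (g - c).
  move=> [Sg nQg] Qc; split; first exact: (subringB HS Sg (ideal_sub HQ Qc)).
  by move=> Qgc; apply: nQg; rewrite -(subrK c g); exact: (idealD HQ Qgc Qc).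
have GM g h : G g -> G h -> G (g * h).
  move=> [Sg nQg] [Sh nQh]; split; first exact: (subringM HS Sg Sh).
  by case/(Qmul _ _ Sg Sh).
have Qc i l : (i < r)%N -> (l < r)%N -> Q (u ^+ (N - (f i).1) * (f i).2 l).
  by move=> ir _; have [QC _] := sys i ir; exact: (idealZ HQ (subringX HS _ Su) (QC l)).
have sys' i : (i < r)%N ->
    u ^+ N * s i = 0 + \sum_(l < r) u ^+ (N - (f i).1) * (f i).2 l * s l.
  move=> ir; have [_ sE] := sys i ir.
  have -> : u ^+ N = u ^+ (N - (f i).1) * u ^+ (f i).1 by rewrite -exprD subnK ?fN.
  by rewrite add0r -mulrA sE mulr_sumr; apply: eq_bigr => l _; rewrite mulrA.
have JM a b : a = 0 -> S b -> b * a = 0 by move=> -> _; rewrite mulr0.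
have JD (a b : K) : a = 0 -> b = 0 -> a + b = 0 by move=> -> ->; rewrite addr0.
have [g [_ nQg] gs0] := determinant_trick (G := G) (J := fun a => a = 0) (ideal_sub HQ)
  (fun g Gg => proj1 Gg) GB GM (fun a b Qa Sb => idealZ HQ Sb Qa) (idealD HQ) JM JD (erefl 0)
  (conj (subringX HS _ Su) uNQ) Qc (fun i _ => erefl 0) sys'.
have g0 : g != 0 by apply/eqP => g0; apply: nQg; rewrite g0; exact: (ideal0 HQ).
move=> a /span_s [c _ ->]; apply: big1 => j _.
by have /eqP := gs0 j (ltn_ord j); rewrite mulf_eq0 (negbTE g0) => /eqP ->; rewrite mulr0.
Qed.

End Saturation.

Lemma prime_ideal_eq0 Q d c : is_prime_ideal S Q -> ~ Q u -> S c -> v ^+ d = u * c ->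
  forall a, Q a -> a = 0.
Proof.
move=> Qprime uQ Sc vd a Qa; have [HQ _ _] := Qprime.
have [n stable] := saturation_stable_mod HQ Sc vd.
have /eqP := saturation_eq0 HQ Qprime uQ (saturation_nakayama HQ stable)
  (ideal_pow_saturation HS HQ u (ideal_pow_exp HS n Qa)).
by rewrite expf_eq0 => /andP [_ /eqP].
Qed.

(* The middle prime P1 is nonzero, and it avoids u: otherwise it would contain
   v, hence m, hence P2. *)
Lemma pow_dvd_no_prime_chain2 d c : S c -> v ^+ d = u * c ->
  ~ exists P0 P1 P2, [/\ is_prime_ideal S P0, is_prime_ideal S P1,
      is_prime_ideal S P2, strict_incl P0 P1 & strict_incl P1 P2].
Proof.
move=> Sc vd [P0 [P1 [P2 [[HP0 _ _] P1prime [HP2 nP21 _] [_ [a [P1a nP0a]]] [_ [b [P2b nP1b]]]]]]].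
have [HP1 _ _] := P1prime.
have a0 : a != 0 by apply/eqP => a0; apply: nP0a; rewrite a0; exact: (ideal0 HP0).
suff uP1 : ~ P1 u by move: a0; rewrite (prime_ideal_eq0 P1prime uP1 Sc vd P1a) eqxx.
move=> P1u; apply: nP1b.
have P1v : P1 v.
  by apply: (prime_ideal_pow HS P1prime Sv (d := d)); rewrite vd; exact: (idealZr HP1 P1u Sc).
have b_nonunit : ~ unitS S b by move=> Ub; apply: nP21; exact: (ideal1_unit HP2 P2b Ub).
have [s [t [Ss St ->]]] := (nonunitP (ideal_sub HP2 P2b)).1 b_nonunit.
by apply: (idealD HP1); [exact: (idealZr HP1 P1u Ss) | exact: (idealZr HP1 P1v St)].
Qed.

End RegularLocalRing.

Lemma regular_local_2C (K : fieldType) (S : K -> Prop) x y :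
  regular_local_2 S x y -> regular_local_2 S y x.
Proof.
case=> noeth Sx Sy dim2 nonunitP; split=> // a Sa.
by split=> [/(nonunitP a Sa)/ideal2C | /ideal2C/(nonunitP a Sa)].
Qed.

Lemma regular_param_pow_neq (k K : fieldType) (iota : {rmorphism k -> K}) S (u v : K) :
  k_subring iota S -> regular_local_2 S u v ->
  (forall a, S a -> exists c, ideal2 S u v (a - iota c)) ->
  forall d c, S c -> v ^+ d != u * c.
Proof.
move=> HS [noeth Su Sv [chain _] nonunitP] residueP d c Sc; apply/eqP => vd.
exact: (pow_dvd_no_prime_chain2 HS Su Sv nonunitP noeth residueP Sc vd chain).
Qed.

Section Valuation.
Variables (k K : fieldType) (iota : {rmorphism k -> K}) (nu : K -> rat).
Hypothesis Hnu : is_k_valuation iota nu.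

Lemma valuationM a b : a != 0 -> b != 0 -> nu (a * b) = nu a + nu b.
Proof. by case: Hnu => + _ _; apply. Qed.

Lemma valuation_iota c : c != 0 -> nu (iota c) = 0.
Proof. by case: Hnu => _ _; apply. Qed.

Lemma valuation1 : nu 1 = 0.
Proof. by rewrite -(rmorph1 iota) valuation_iota ?oner_neq0. Qed.

Lemma valuationV a : a != 0 -> nu a^-1 = - nu a.
Proof.
move=> a0; apply/eqP; rewrite -subr_eq0 opprK addrC -valuationM ?invr_eq0 //.
by rewrite mulfV // valuation1.
Qed.

Lemma valuationX a m : a != 0 -> nu (a ^+ m) = m%:R * nu a.
Proof.
move=> a0; elim: m => [|m IH]; first by rewrite expr0 valuation1 mul0r.
by rewrite exprS valuationM ?expf_neq0 // IH mulrSr mulrDl mul1r addrC.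
Qed.

Lemma valuationN a : a != 0 -> nu (- a) = nu a.
Proof.
move=> a0; have m10 : (-1 : k) != 0 by rewrite oppr_eq0 oner_neq0.
by rewrite -mulN1r -(rmorph1 iota) -rmorphN valuationM ?fmorph_eq0 // valuation_iota // add0r.
Qed.

Lemma valuation_mprod (T : nat -> K) l nn : (forall j, (j < l)%N -> T j != 0) ->
  mprod T l nn != 0 /\ nu (mprod T l nn) = \sum_(j < l) (nn j)%:R * nu (T j).
Proof.
rewrite /mprod; elim: l => [|l IH] T0; first by rewrite !big_ord0 valuation1 oner_neq0.
have [P0 nuP] := IH (fun j jl => T0 j (ltn_trans jl (ltnSn l))).
have Tl0 : T l ^+ nn l != 0 by rewrite expf_neq0 // T0.
by rewrite !big_ord_recr /= mulf_neq0 // valuationM // nuP valuationX ?T0.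
Qed.

Lemma valuation_min a b : a != 0 -> b != 0 -> a + b != 0 ->
  Num.min (nu a) (nu b) <= nu (a + b).
Proof. by case: Hnu => _ + _; apply. Qed.

Lemma valmaxN a : valmax nu a -> valmax nu (- a).
Proof.
case=> [->|a_gt0]; first by left; rewrite oppr0.
by have [->|a0] := eqVneq a 0; [left; rewrite oppr0 | right; rewrite valuationN].
Qed.

Lemma valmaxB a b : valmax nu a -> valmax nu b -> valmax nu (a - b).
Proof.
move=> va /valmaxN vb; have [->|a0] := eqVneq a 0; first by rewrite add0r.
have [->|b0] := eqVneq (- b) 0; first by rewrite addr0.
have [ab0|ab0] := eqVneq (a - b) 0; first by left.
case: va => [/eqP|a_gt0]; first by rewrite (negbTE a0).
case: vb => [/eqP|b_gt0]; first by rewrite (negbTE b0).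
by right; apply: lt_le_trans (valuation_min a0 b0 ab0); rewrite lt_min a_gt0.
Qed.

Lemma residue_unique a l1 l2 : is_residue iota nu a l1 -> is_residue iota nu a l2 -> l1 = l2.
Proof.
move=> r1 r2; apply/eqP; rewrite -subr_eq0; apply: contraT => d0.
have := valmaxB r2 r1.
have -> : a - iota l2 - (a - iota l1) = iota (l1 - l2) by rewrite rmorphB; ring.
by case=> [/eqP|]; [rewrite fmorph_eq0 (negbTE d0) | rewrite valuation_iota // ltxx].
Qed.

End Valuation.

Definition in_frac (d : nat) (r : rat) := exists z : int, r = z%:~R / d%:R.

Lemma in_fracD d r1 r2 : in_frac d r1 -> in_frac d r2 -> in_frac d (r1 + r2).
Proof. by move=> [z1 ->] [z2 ->]; exists (z1 + z2); rewrite rmorphD mulrDl. Qed.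

Lemma in_fracZ d (z : int) r : in_frac d r -> in_frac d (z%:~R * r).
Proof. by move=> [z1 ->]; exists (z * z1); rewrite rmorphM mulrA. Qed.

Lemma in_frac_dvd d d' r : (d %| d')%N -> (0 < d')%N -> in_frac d r -> in_frac d' r.
Proof.
move=> /dvdnP [m ->]; rewrite muln_gt0 => /andP [m_gt0 d_gt0] [z ->].
have m0 : m%:R != 0 :> rat by rewrite pnatr_eq0 -lt0n.
have d0 : d%:R != 0 :> rat by rewrite pnatr_eq0 -lt0n.
by exists (z * m%:R); rewrite natrM rmorphM /= rmorph_nat; field; rewrite m0 d0.
Qed.

Lemma in_frac_sum d n (c : nat -> int) (w : nat -> rat) :
  (forall j, (j < n)%N -> in_frac d (w j)) -> in_frac d (\sum_(j < n) (c j)%:~R * w j).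
Proof.
move=> dw; elim: n dw => [|n IH] dw; first by rewrite big_ord0; exists 0; rewrite mul0r.
rewrite big_ord_recr /=; apply: in_fracD; last exact/in_fracZ/dw.
by apply: IH => j jn; apply: dw; exact: ltn_trans jn _.
Qed.

Lemma pos_rat_frac (r : rat) : 0 < r ->
  exists p q : nat, [/\ (0 < p)%N, (0 < q)%N, coprime p q & r = p%:R / q%:R].
Proof.
move=> r_gt0; exists `|numq r|%N, `|denq r|%N.
have num_gt0 : 0 < numq r by rewrite numq_gt0.
split; [by rewrite absz_gt0 gt_eqF | by rewrite absz_gt0 denq_neq0 | |].
  exact: coprime_num_den.
by rewrite -{1}(divq_num_den r) !pmulrn !gez0_abs ?(ltW num_gt0) ?(ltW (denq_gt0 r)).
Qed.

Lemma qprod0 q : qprod q 0 = 1%N.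
Proof. by rewrite /qprod big_geq. Qed.

Lemma qprodS q l : qprod q l.+1 = (qprod q l * q l.+1)%N.
Proof. by rewrite /qprod big_nat_recr. Qed.

Lemma qprod_dvd q l l' : (l <= l')%N -> (qprod q l %| qprod q l')%N.
Proof.
move=> /subnK <-; elim: (l' - l)%N => [|m IH]; first by rewrite add0n.
by rewrite addSn qprodS dvdn_mulr.
Qed.

Section JumpingValues.
Variables (w : nat -> rat) (p q : nat -> nat) (i : nat).
Hypotheses (w0 : w 0%N = 1) (w1 : w 1%N = (p 1%N)%:R / (q 1%N)%:R).
Hypothesis pq_coprime : forall l, (0 < l <= i)%N ->
  [/\ (0 < p l)%N, (0 < q l)%N & coprime (p l) (q l)].
Hypothesis wS : forall l, (0 < l < i)%N ->
  w l.+1 = (q l)%:R * w l + ((qprod q l)%:R)^-1 * ((p l.+1)%:R / (q l.+1)%:R).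
Hypothesis i_gt0 : (0 < i)%N.

Local Notation E := (qprod q).

Lemma q_gt0 l : (0 < l <= i)%N -> (0 < q l)%N.
Proof. by case/pq_coprime. Qed.

Lemma q_neq0 l : (0 < l <= i)%N -> (q l)%:R != 0 :> rat.
Proof. by move/q_gt0; rewrite pnatr_eq0 -lt0n. Qed.

Lemma qprod_gt0 l : (l <= i)%N -> (0 < E l)%N.
Proof.
elim: l => [|l IH] li; first by rewrite qprod0.
by rewrite qprodS muln_gt0 IH ?(ltnW li) // q_gt0.
Qed.

Lemma qprod_neq0 l : (l <= i)%N -> (E l)%:R != 0 :> rat.
Proof. by move/qprod_gt0; rewrite pnatr_eq0 -lt0n. Qed.

Lemma qprod_pred l : (0 < l)%N -> E l = (E l.-1 * q l)%N.
Proof. by move=> l_gt0; rewrite -{1}(prednK l_gt0) qprodS prednK. Qed.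

Lemma value_decomp l : (0 < l <= i)%N ->
  exists A : int, w l = A%:~R / (E l.-1)%:R + (p l)%:R / (E l)%:R.
Proof.
elim: l => [|l IH] // /andP [_ li].
have [->|l_gt0] := posnP l; first by exists 0; rewrite mul0r add0r w1 qprodS qprod0 mul1n.
have l_range : (0 < l <= i)%N by rewrite l_gt0 ltnW.
rewrite wS ?l_gt0 //; have [A ->] := IH l_range.
exists ((q l)%:R * (A * (q l)%:R + (p l)%:R)).
rewrite qprodS (qprod_pred l_gt0) !natrM rmorphM rmorphD rmorphM /= !rmorph_nat.
have Epred0 := qprod_neq0 (leq_trans (leq_pred l) (ltnW li)).
by field; rewrite Epred0 !q_neq0 ?l_range.
Qed.

Lemma value_in_frac l : (l <= i)%N -> in_frac (E l) (w l).
Proof.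
move=> li; have [->|l_gt0] := posnP l; first by rewrite w0 qprod0; exists 1; rewrite divr1.
have l_range : (0 < l <= i)%N by rewrite l_gt0 li.
have [A ->] := value_decomp l_range.
apply: in_fracD; last by exists (p l)%:R; rewrite rmorph_nat.
by apply: (in_frac_dvd (qprod_dvd q (leq_pred l)) (qprod_gt0 li)); exists A.
Qed.

Lemma value_dominates l : (0 < l <= i)%N ->
  0 < w l /\ \sum_(1 <= j < l) ((q j)%:R - 1) * w j < w l.
Proof.
elim: l => [|l IH] // /andP [_ li].
have [->|l_gt0] := posnP l.
  rewrite big_geq // w1; have [p_gt0 q_gt0 _] := (@pq_coprime 1%N i_gt0).
  by split=> //; apply: divr_gt0; rewrite ltr0n.
have l_range : (0 < l <= i)%N by rewrite l_gt0 ltnW.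
have [wl_gt0 sum_lt] := IH l_range.
rewrite big_nat_recr //= wS ?l_gt0 //.
have new_gt0 : 0 < ((E l)%:R)^-1 * ((p l.+1)%:R / (q l.+1)%:R) :> rat.
  have [p_gt0 q_gt0 _] := (@pq_coprime l.+1 li).
  by rewrite mulr_gt0 ?divr_gt0 ?invr_gt0 ?ltr0n ?qprod_gt0 ?(ltnW li).
have q_ge1 : 1 <= (q l)%:R :> rat by rewrite ler1n q_gt0.
have : 0 <= ((q l)%:R - 1) * w l by apply: mulr_ge0; [rewrite subr_ge0 | exact: ltW].
rewrite mulrBl mul1r; split; lra.
Qed.

(* Since w_l exceeds the sum of all the (q_j - 1) w_j, the coefficient of
   w_0 = 1 in such a representation has to be positive. *)
Lemma value_repr_head_gt0 l (nn : nat -> int) : (0 < l <= i)%N ->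
  (forall j, (0 < j < l)%N -> 0 <= nn j < (q j)%:Z) ->
  (q l)%:R * w l = \sum_(j < l) (nn j)%:~R * w j -> 0 < nn 0%N.
Proof.
move=> l_range nn_lt wE; have /andP [l_gt0 li] := l_range.
have [wl_gt0 sum_lt] := value_dominates l_range.
have sum_le : \sum_(1 <= j < l) (nn j)%:~R * w j <= \sum_(1 <= j < l) ((q j)%:R - 1) * w j.
  rewrite big_nat_cond [X in _ <= X]big_nat_cond; apply: ler_sum => j /andP [/andP [j_gt0 jl] _].
  have j_range : (0 < j <= i)%N by rewrite j_gt0 (leq_trans (ltnW jl)).
  have [wj_gt0 _] := value_dominates j_range.
  apply: ler_wpM2r; first exact: ltW.
  have /andP [_ nn_ltq] : (0 <= nn j < (q j)%:Z) by apply: nn_lt; rewrite j_gt0.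
  have : nn j + 1 <= (q j)%:Z by rewrite lezD1.
  by rewrite -(ler_int rat) rmorphD /= -pmulrn => ?; lra.
move: wE; rewrite -(big_mkord xpredT (fun j => (nn j)%:~R * w j)) big_ltn // w0 mulr1 => wE.
have q_ge1 : 1 <= (q l)%:R :> rat by rewrite ler1n q_gt0.
have : 0 <= ((q l)%:R - 1) * w l by apply: mulr_ge0; [rewrite subr_ge0 | exact: ltW].
rewrite mulrBl mul1r -(ltr0z rat) => ?; lra.
Qed.

(* The coefficient t of w_l is chosen with t p_l = z (mod q_l), so that
   z / E_l - t w_l has denominator E_(l-1). *)
Lemma value_repr l : (0 < l <= i)%N -> forall z : int, exists nn : nat -> int,
  (forall j, (0 < j < l)%N -> 0 <= nn j < (q j)%:Z) /\
  z%:~R / (E l.-1)%:R = \sum_(j < l) (nn j)%:~R * w j.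
Proof.
elim: l => [|l IH] // /andP [_ li] z.
have [l0|l_gt0] := posnP l.
  rewrite l0; exists (fun _ => z); split=> [[|[|j]] //|].
  by rewrite big_ord1 w0 mulr1 qprod0 invr1 mulr1.
have l_range : (0 < l <= i)%N by rewrite l_gt0 ltnW.
have [A wE] := value_decomp l_range.
have [a [b bezout]] : exists a b : int, a * (p l)%:Z + b * (q l)%:Z = 1.
  have [_ _ cop] := pq_coprime l_range.
  have /coprimezP [[a b] /= ab] : coprimez (p l) (q l) by rewrite coprimezE.
  by exists a, b.
have q0 : (q l)%:Z != 0 by rewrite -lt0n q_gt0.
pose kq := ((z * a) %/ (q l)%:Z)%Z; pose t := ((z * a) %% (q l)%:Z)%Z.
pose M := z * b + kq * (p l)%:Z.
have zE : z = M * (q l)%:Z + t * (p l)%:Z.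
  have za := divz_eq (z * a) (q l)%:Z; rewrite -/t -/kq in za.
  have -> : t = z * a - kq * (q l)%:Z by rewrite za; ring.
  by rewrite /M -[z in LHS]mulr1 -bezout; ring.
have t_range : 0 <= t < (q l)%:Z by rewrite modz_ge0 //= -[X in _ < X]gez0_abs ?ltz_mod.
clearbody kq t M.
have [nn [nn_lt sumE]] := IH l_range (M - t * A).
exists (fun j => if j == l then t else nn j); split.
  move=> j /andP [j_gt0 jl]; case: eqP => [->|/eqP jnl] //.
  by apply: nn_lt; rewrite j_gt0 ltn_neqAle jnl -ltnS.
rewrite big_ord_recr /= eqxx (eq_bigr (fun j : 'I_l => (nn j)%:~R * w j)); last first.
  by move=> j _; rewrite ltn_eqF.
rewrite -sumE wE (qprod_pred l_gt0) natrM {1}zE rmorphD !rmorphM rmorphB rmorphM /= -!pmulrn.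
have Epred0 := qprod_neq0 (leq_trans (leq_pred l) (ltnW li)).
by field; rewrite Epred0 q_neq0.
Qed.

(* Only the last term of the combination has a denominator divisible by q_l,
   so q_l divides d_l. *)
Lemma value_repr_uniq l (d : nat -> int) : (0 < l <= i)%N ->
  (forall j, (0 < j < l)%N -> (`|d j| < q j)%N) ->
  \sum_(j < l) (d j)%:~R * w j = 0 -> forall j, (j < l)%N -> d j = 0.
Proof.
elim: l => [|l IH] // /andP [_ li] d_lt sum0.
have [l0|l_gt0] := posnP l.
  move: sum0; rewrite l0 big_ord1 w0 mulr1 => /eqP; rewrite intr_eq0 => /eqP d0.
  by move=> j; rewrite ltnS leqn0 => /eqP ->.
have l_range : (0 < l <= i)%N by rewrite l_gt0 ltnW.
have [A wE] := value_decomp l_range.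
have Epred0 := qprod_neq0 (leq_trans (leq_pred l) (ltnW li)).
have [Z ZE] : in_frac (E l.-1) (\sum_(j < l) (d j)%:~R * w j).
  apply: in_frac_sum => j jl; have jl' : (j <= l.-1)%N by rewrite -ltnS prednK.
  apply: (in_frac_dvd (qprod_dvd q jl') (qprod_gt0 (leq_trans (leq_pred l) (ltnW li)))).
  exact: (value_in_frac (leq_trans (ltnW jl) (ltnW li))).
move: sum0; rewrite big_ord_recr /= ZE wE (qprod_pred l_gt0) natrM => sum0.
have dvd_dp : ((q l)%:Z %| d l * (p l)%:Z)%Z.
  suff -> : d l * (p l)%:Z = - (Z + d l * A) * (q l)%:Z by rewrite dvdz_mull // dvdzz.
  apply/eqP; rewrite -(eqr_int rat) !rmorphM /= rmorphN rmorphD rmorphM /= -!pmulrn -subr_eq0.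
  suff -> : (d l)%:~R * (p l)%:R - - (Z%:~R + (d l)%:~R * A%:~R) * (q l)%:R =
    (Z%:~R / (E l.-1)%:R + (d l)%:~R * (A%:~R / (E l.-1)%:R + (p l)%:R / ((E l.-1)%:R * (q l)%:R)))
      * ((E l.-1)%:R * (q l)%:R) :> rat by rewrite sum0 mul0r.
  by field; rewrite Epred0 q_neq0.
have dl0 : d l = 0.
  have [_ _ cop] := pq_coprime l_range.
  move: dvd_dp; rewrite Gauss_dvdzl ?coprimezE 1?coprime_sym // dvdzE /= => dvd_d.
  have [/eqP|d_gt0] := posnP `|d l|%N; first by rewrite absz_eq0 => /eqP.
  by have := dvdn_leq d_gt0 dvd_d; rewrite leqNgt d_lt // l_gt0 /=.
move=> j; rewrite ltnS leq_eqVlt => /orP [/eqP ->|jl] //.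
apply: (IH l_range) => // [j' /andP [j'_gt0 j'l]|].
  by apply: d_lt; rewrite j'_gt0 (ltn_trans j'l).
by move: sum0; rewrite dl0 mul0r addr0 -ZE.
Qed.

Lemma jump_repr_exists : exists nn : nat -> nat,
  (forall j, (0 < j < i)%N -> (nn j < q j)%N) /\
  (q i)%:R * w i = \sum_(j < i) (nn j)%:R * w j.
Proof.
have i_range : (0 < i <= i)%N by rewrite i_gt0 leqnn.
have [A wE] := value_decomp i_range.
have [nn [nn_lt sumE]] := value_repr i_range ((q i)%:Z * A + (p i)%:Z).
have qwE : (q i)%:R * w i = ((q i)%:Z * A + (p i)%:Z)%:~R / (E i.-1)%:R.
  rewrite wE (qprod_pred i_gt0) natrM rmorphD rmorphM /= -!pmulrn.
  by field; rewrite qprod_neq0 ?leq_pred // q_neq0.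
rewrite -qwE in sumE.
have nn_ge0 j : (j < i)%N -> 0 <= nn j.
  have [->|j_gt0 ji] := posnP j; first by move=> _; exact/ltW/(value_repr_head_gt0 i_range nn_lt).
  by have /andP [] : 0 <= nn j < (q j)%:Z by apply: nn_lt; rewrite j_gt0.
exists (fun j => `|nn j|%N); split=> [j /andP [j_gt0 ji]|].
  have /andP [_ nn_lt_q] : 0 <= nn j < (q j)%:Z by apply: nn_lt; rewrite j_gt0.
  by rewrite -ltz_nat gez0_abs ?nn_ge0.
by rewrite sumE; apply: eq_bigr => j _; rewrite pmulrn gez0_abs ?nn_ge0.
Qed.

Lemma jump_repr_unique (nn1 nn2 : nat -> nat) :
  (forall j, (0 < j < i)%N -> (nn1 j < q j)%N) ->
  (forall j, (0 < j < i)%N -> (nn2 j < q j)%N) ->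
  \sum_(j < i) (nn1 j)%:R * w j = \sum_(j < i) (nn2 j)%:R * w j ->
  forall j, (j < i)%N -> nn1 j = nn2 j.
Proof.
move=> nn1_lt nn2_lt sumE j ji; apply/eqP; rewrite -(eqz_nat (nn1 j)) -subr_eq0; apply/eqP.
apply: (value_repr_uniq (d := fun j => (nn1 j)%:Z - (nn2 j)%:Z)) ji.
- by rewrite i_gt0 leqnn.
- by move=> j' j'_range; have := nn1_lt j' j'_range; have := nn2_lt j' j'_range; lia.
under eq_bigr do rewrite rmorphB /= -!pmulrn mulrBl.
by rewrite sumrB sumE subrr.
Qed.

Lemma jump_repr_head_gt0 l (nn : nat -> nat) : (0 < l <= i)%N ->
  (forall j, (0 < j < l)%N -> (nn j < q j)%N) ->
  (q l)%:R * w l = \sum_(j < l) (nn j)%:R * w j -> (0 < nn 0%N)%N.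
Proof.
move=> l_range nn_lt wE; rewrite -ltz_nat.
apply: (value_repr_head_gt0 (nn := fun j => (nn j)%:Z) l_range).
  by move=> j /nn_lt; rewrite ltz_nat.
by rewrite wE; apply: eq_bigr => j _; rewrite -pmulrn.
Qed.
End JumpingValues.

Section JumpingCongruence.
Variables (k K : fieldType) (iota : {rmorphism k -> K}) (S : K -> Prop) (x y : K).
Hypotheses (HS : k_subring iota S) (Sx : S x) (Sy : S y).

Lemma dvd_in_subX a b m : S a -> S b -> dvd_in S x (a - b) -> dvd_in S x (a ^+ m - b ^+ m).
Proof.
move=> Sa Sb [c Sc abE]; elim: m => [|m [c' Sc' abmE]].
  by exists 0; rewrite ?subrr ?mulr0 //; exact: (subring0 HS).
exists (a * c' + c * b ^+ m).
  by apply: (subringD HS); apply: (subringM HS) => //; exact: (subringX HS).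
have -> : a ^+ m.+1 - b ^+ m.+1 = a * (a ^+ m - b ^+ m) + (a - b) * b ^+ m by rewrite !exprS; ring.
by rewrite abmE abE; ring.
Qed.

Lemma mprod_dvd (T : nat -> K) l nn : (0 < l)%N -> (0 < nn 0%N)%N -> T 0%N = x ->
  (forall j, (j < l)%N -> S (T j)) -> dvd_in S x (mprod T l nn).
Proof.
case: l => // l _ nn0 T0 ST; rewrite /mprod big_ord_recl /= T0.
exists (x ^+ (nn 0%N).-1 * \prod_(j < l) T (bump 0 j) ^+ nn (bump 0 j)).
  apply: (subringM HS); first exact: (subringX HS).
  apply: (subring_prod HS) => j _; apply: (subringX HS); apply: ST.
  by rewrite /bump leq0n add1n ltnS ltn_ord.
by rewrite mulrA -exprS prednK.
Qed.

Lemma next_jump_congr (T : nat -> K) l nn m c e : T 0%N = x -> (0 < l)%N -> (0 < nn 0%N)%N ->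
  (forall j, (j <= l)%N -> S (T j)) -> dvd_in S x (T l - y ^+ e) ->
  S (T l ^+ m - iota c * mprod T l nn) /\
  dvd_in S x (T l ^+ m - iota c * mprod T l nn - y ^+ (e * m)).
Proof.
move=> T0 l_gt0 nn0 ST Tl_congr.
have ST' j : (j < l)%N -> S (T j) by move=> jl; apply: ST; exact: ltnW.
have SP : S (mprod T l nn).
  by apply: (subring_prod HS) => j _; exact: (subringX HS _ (ST' j (ltn_ord j))).
split.
  apply: (subringB HS); first exact: (subringX HS _ (ST l (leqnn l))).
  exact: (subringM HS (subring_iota HS c) SP).
have [c1 Sc1 c1E] := dvd_in_subX m (ST l (leqnn l)) (subringX HS e Sy) Tl_congr.
have [c2 Sc2 c2E] := mprod_dvd l_gt0 nn0 T0 ST'.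
exists (c1 - iota c * c2); first exact: (subringB HS Sc1 (subringM HS (subring_iota HS c) Sc2)).
rewrite c2E exprM mulrBr -c1E; ring.
Qed.

Lemma jumping_congr (T : nat -> K) (q : nat -> nat) (n : nat -> nat -> nat) (lam : nat -> k) i :
  T 0%N = x -> T 1%N = y ->
  (forall l, (0 < l < i)%N ->
     T l.+1 = T l ^+ q l - iota (lam l) * mprod T l (n l) /\ (0 < n l 0%N)%N) ->
  forall l, (l <= i)%N ->
    (forall j, (j <= l)%N -> S (T j)) /\ ((0 < l)%N -> exists e, dvd_in S x (T l - y ^+ e)).
Proof.
move=> T0 T1 TS; elim=> [|l IH] li.
  by split=> // j; rewrite leqn0 => /eqP ->; rewrite T0.
have [ST Tl_congr] := IH (ltnW li).
have [l0|l_gt0] := posnP l.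
  rewrite l0; split=> [j|_].
    by rewrite leq_eqVlt ltnS leqn0 => /orP [] /eqP ->; rewrite ?T0 ?T1.
  by exists 1%N, 0; rewrite ?T1 ?expr1 ?subrr ?mulr0 //; exact: (subring0 HS).
have [TlE nn0] : T l.+1 = T l ^+ q l - iota (lam l) * mprod T l (n l) /\ (0 < n l 0%N)%N.
  by apply: TS; rewrite l_gt0.
have [e congr_e] := Tl_congr l_gt0.
have [STl congr_l] := next_jump_congr (q l) (lam l) T0 l_gt0 nn0 ST congr_e.
split=> [j|_]; last by exists (e * q l)%N; rewrite TlE.
by rewrite leq_eqVlt ltnS => /orP [/eqP ->|]; [rewrite TlE | exact: ST].
Qed.

End JumpingCongruence.

Section JumpingPolynomials.
Variables (k K : fieldType) (iota : {rmorphism k -> K}) (nu : K -> rat) (S : K -> Prop) (x y : K).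
Hypotheses (HS : k_subring iota S) (Hnu : is_k_valuation iota nu).
Hypotheses (resk : residue_field_is_k iota nu) (Hdom : dominates nu S).
Hypothesis Hreg : regular_local_2 S x y.

Lemma dominated_unit_valuation a : unitS S a -> nu a = 0.
Proof.
move=> [Sa [a0 Sa']]; have [Vdom _] := Hdom.
case: (Vdom a Sa) => [/eqP|a_ge0]; first by rewrite (negbTE a0).
case: (Vdom _ Sa') => [/eqP|]; first by rewrite invr_eq0 (negbTE a0).
by rewrite (valuationV Hnu a0) oppr_ge0 => a_le0; apply/eqP; rewrite eq_le a_le0 a_ge0.
Qed.

Lemma residue_max_ideal a : S a -> exists c, ideal2 S x y (a - iota c).
Proof.
move=> Sa; have [Vdom _] := Hdom; have [c res] := resk (Vdom a Sa); exists c.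
have [_ _ _ _ nonunitP] := Hreg.
apply/(nonunitP _ (subringB HS Sa (subring_iota HS c))) => -[Sac [ac0 Sac']].
have := dominated_unit_valuation (conj Sac (conj ac0 Sac')).
by case: res => [/eqP|pos nu0]; [rewrite (negbTE ac0) | rewrite nu0 ltxx in pos].
Qed.

Lemma y_pow_not_dvd d c : S c -> y ^+ d != x * c.
Proof. exact: (regular_param_pow_neq HS Hreg residue_max_ideal). Qed.

Lemma regular_params_neq0 : x != 0 /\ y != 0.
Proof.
have residue_yx a (Sa : S a) : exists c, ideal2 S y x (a - iota c).
  by have [c /ideal2C] := residue_max_ideal Sa; exists c.
have := regular_param_pow_neq HS (regular_local_2C Hreg) residue_yx 1 (subring0 HS).
have := y_pow_not_dvd 1 (subring0 HS).
by rewrite !expr1 !mulr0.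
Qed.

Lemma valuation_y_gt0 : 0 < nu y.
Proof.
have [_ _ Sy _ nonunitP] := Hreg; have [_ Vmax] := Hdom.
have [_ y0] := regular_params_neq0.
case: (Vmax y Sy) => [|/eqP|//]; last by rewrite (negbTE y0).
apply/(nonunitP y Sy); exists 0, 1.
by split; [exact: (subring0 HS) | exact: (subring1 HS) | rewrite mulr0 mulr1 add0r].
Qed.

Variables (T : nat -> K) (p q : nat -> nat) (n : nat -> nat -> nat) (lam : nat -> k) (i : nat).
Hypotheses (nux : nu x = 1) (i_gt0 : (0 < i)%N) (hist : history iota nu x y T p q n lam i).

Let nuT0 : nu (T 0%N) = 1.
Proof. by case: hist => -[-> _]. Qed.

Let nuT1 : nu (T 1%N) = (p 1%N)%:R / (q 1%N)%:R.
Proof. by case: hist. Qed.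

Let pq_coprime l : (0 < l <= i)%N -> [/\ (0 < p l)%N, (0 < q l)%N & coprime (p l) (q l)].
Proof. by case: hist => _ _ + _ _; apply. Qed.

Let nuTS l : (0 < l < i)%N ->
  nu (T l.+1) = (q l)%:R * nu (T l) + ((qprod q l)%:R)^-1 * ((p l.+1)%:R / (q l.+1)%:R).
Proof. by case: hist => _ _ _ _ /(_ l) + li; case/(_ li). Qed.

Let T_neq0 l : (l <= i)%N -> T l != 0.
Proof. by case: hist => _ + _ _ _; apply. Qed.

Lemma ncond_exists : exists nn, ncond nu T q i nn.
Proof. exact: (jump_repr_exists (w := fun j => nu (T j)) nuT0 nuT1 pq_coprime nuTS i_gt0). Qed.

Lemma ncond_unique nn1 nn2 : ncond nu T q i nn1 -> ncond nu T q i nn2 ->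
  forall j, (j < i)%N -> nn1 j = nn2 j.
Proof.
move=> [lt1 E1] [lt2 E2].
apply: (jump_repr_unique (w := fun j => nu (T j)) nuT0 nuT1 pq_coprime nuTS i_gt0 lt1 lt2).
by rewrite -E1 -E2.
Qed.

Lemma ncond_head_gt0 l nn : (0 < l <= i)%N -> ncond nu T q l nn -> (0 < nn 0%N)%N.
Proof.
move=> l_range [nn_lt wE].
exact: (jump_repr_head_gt0 (w := fun j => nu (T j)) nuT0 nuT1 pq_coprime nuTS i_gt0
  l_range nn_lt wE).
Qed.

Lemma jump_ratio_valuation nn : ncond nu T q i nn ->
  jump_ratio T q i nn != 0 /\ nu (jump_ratio T q i nn) = 0.
Proof.
move=> [_ nuE].
have [P0 nuP] := valuation_mprod Hnu nn (fun j ji => T_neq0 (ltnW ji)).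
have Tq0 : T i ^+ q i != 0 by rewrite expf_neq0 ?T_neq0.
rewrite /jump_ratio mulf_neq0 ?invr_eq0 //; split=> //.
rewrite (valuationM Hnu) ?invr_eq0 // (valuationV Hnu) // (valuationX Hnu) ?T_neq0 //.
by rewrite nuP -nuE subrr.
Qed.

Lemma jump_residue_exists nn : ncond nu T q i nn ->
  exists lam_i, is_residue iota nu (jump_ratio T q i nn) lam_i.
Proof. by move=> /jump_ratio_valuation [_ nu0]; apply: resk; right; rewrite nu0. Qed.

(* T_(i+1) is congruent modulo x to a power of y, and no power of y lies in xS. *)
Lemma next_jump_neq0 nn lam_i : ncond nu T q i nn ->
  T i ^+ q i - iota lam_i * mprod T i nn != 0.
Proof.
move=> Hnn; have [[T0 T1] _ _ _ TS] := hist; have [_ Sx Sy _ _] := Hreg.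
have TS' l : (0 < l < i)%N ->
    T l.+1 = T l ^+ q l - iota (lam l) * mprod T l (n l) /\ (0 < n l 0%N)%N.
  move=> l_range; have [nc _ TlE _] := TS l l_range; split=> //.
  by apply: (ncond_head_gt0 _ nc); case/andP: l_range => -> /ltnW ->.
have [ST congr_i] := jumping_congr HS Sx Sy T0 T1 TS' (leqnn i).
have [e congr_e] := congr_i i_gt0.
have nn0 : (0 < nn 0%N)%N by apply: (ncond_head_gt0 _ Hnn); rewrite i_gt0 leqnn.
have [_ [c Sc cE]] := next_jump_congr HS Sx Sy (q i) lam_i T0 i_gt0 nn0 ST congr_e.
apply/eqP => T'0; move: cE; rewrite T'0 sub0r => /(congr1 -%R); rewrite opprK -mulrN => yE.
by move: (y_pow_not_dvd (e * q i) (subringN HS Sc)); rewrite yE eqxx.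
Qed.

Lemma next_jump_valuation nn lam_i :
  ncond nu T q i nn -> is_residue iota nu (jump_ratio T q i nn) lam_i ->
  exists p' q' : nat, [/\ (0 < p')%N, (0 < q')%N, coprime p' q' &
    nu (T i ^+ q i - iota lam_i * mprod T i nn) =
      (q i)%:R * nu (T i) + ((qprod q i)%:R)^-1 * (p'%:R / q'%:R)].
Proof.
move=> Hnn res; have [_ nuE] := Hnn.
have [P0 nuP] := valuation_mprod Hnu nn (fun j ji => T_neq0 (ltnW ji)).
have T'E : T i ^+ q i - iota lam_i * mprod T i nn =
    mprod T i nn * (jump_ratio T q i nn - iota lam_i).
  by rewrite /jump_ratio mulrBr mulrCA divff // mulr1 mulrC.
have D0 : jump_ratio T q i nn - iota lam_i != 0.
  by apply: contraNneq (next_jump_neq0 lam_i Hnn) => D0; rewrite T'E D0 mulr0.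
have D_gt0 : 0 < nu (jump_ratio T q i nn - iota lam_i).
  by case: res => [/eqP|//]; rewrite (negbTE D0).
have E_gt0 : 0 < (qprod q i)%:R :> rat by rewrite ltr0n (qprod_gt0 pq_coprime (leqnn i)).
have [p' [q' [p'_gt0 q'_gt0 cop pqE]]] := pos_rat_frac (mulr_gt0 E_gt0 D_gt0).
exists p', q'; split=> //.
by rewrite T'E (valuationM Hnu) // nuP -nuE -pqE mulKf ?gt_eqF.
Qed.

End JumpingPolynomials.

Unset Implicit Arguments.
Theorem corollary5p10 (k : closedFieldType) (K : fieldType)
    (iota : {rmorphism k -> K}) (nu : K -> rat) (S : K -> Prop) (x y : K) :
  [pchar k] =i pred0 ->
  function_field_trdeg2 iota ->
  is_k_valuation iota nu ->
  residue_field_is_k iota nu ->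
  algebraic_local_ring iota S ->
  regular_local_2 S x y ->
  quotient_field S ->
  dominates nu S ->
  nu x = 1 ->
  (x != 0 /\ y != 0 /\
     exists p1 q1 : nat, [/\ (0 < p1)%N, (0 < q1)%N, coprime p1 q1 &
                            nu y = p1%:R / q1%:R]) /\
  forall (T : nat -> K) (p q : nat -> nat) (n : nat -> nat -> nat)
         (lam : nat -> k) (i : nat),
    (0 < i)%N -> history iota nu x y T p q n lam i ->
    (exists nn : nat -> nat, ncond nu T q i nn) /\
    (forall nn1 nn2 : nat -> nat, ncond nu T q i nn1 -> ncond nu T q i nn2 ->
       forall j, (j < i)%N -> nn1 j = nn2 j) /\
    forall nn : nat -> nat, ncond nu T q i nn ->
      (exists lam_i : k, is_residue iota nu (jump_ratio T q i nn) lam_i) /\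
      (forall l1 l2 : k, is_residue iota nu (jump_ratio T q i nn) l1 ->
         is_residue iota nu (jump_ratio T q i nn) l2 -> l1 = l2) /\
      forall lam_i : k, is_residue iota nu (jump_ratio T q i nn) lam_i ->
        let T' := T i ^+ q i - iota lam_i * mprod T i nn in
        T' != 0 /\
        exists p' q' : nat, [/\ (0 < p')%N, (0 < q')%N, coprime p' q' &
          nu T' = (q i)%:R * nu (T i) + ((qprod q i)%:R)^-1 * (p'%:R / q'%:R)].
Proof.
move=> _ _ Hnu resk Halg Hreg _ Hdom nux.
have HS := algebraic_local_ring_subring Halg.
have [x0 y0] := regular_params_neq0 HS Hnu resk Hdom Hreg.
split; first by do 2!split=> //; exact: (pos_rat_frac (valuation_y_gt0 HS Hnu resk Hdom Hreg)).
move=> T p q n lam i i_gt0 hist.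
split; first exact: (ncond_exists nux i_gt0 hist).
split; first exact: (ncond_unique nux i_gt0 hist).
move=> nn Hnn; split; first exact: (jump_residue_exists Hnu resk hist Hnn).
split; first by move=> l1 l2; exact: (residue_unique Hnu).
move=> lam_i res; split.
  exact: (next_jump_neq0 HS Hnu resk Hdom Hreg nux i_gt0 hist lam_i Hnn).
exact: (next_jump_valuation HS Hnu resk Hdom Hreg nux i_gt0 hist Hnn res).
Qed.
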